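(* Let $M=(V,\delta)$ be an $n$-point metric in which all pairwise distances are distinct, and let $r:V\to\mathbb{R}^+$ be a range assignment. Let $F$ be the minimum spanning forest of $S=SDG(M,r)$ and let $H$ be a minimum-weight Hamiltonian path of $M$. Then $w(F)\le \log_{5/4} n \cdot w(H)$.
   Context: A metric $M=(V,\delta)$ is viewed as the complete weighted graph on $V$ with edge weights $\delta(u,v)$. A range assignment is a map $r:V\to\mathbb{R}^+$. The symmetric disk graph $SDG(M,r)$ is the undirected spanning subgraph of this complete graph containing the edge $(u,v)$ (with weight $\delta(u,v)$) if and only if $r(u)\ge\delta(u,v)$ and $r(v)\ge\delta(u,v)$. The minimum spanning forest of a weighted graph is a spanning forest with the same connected components and minimum total weight. The weight of a graph is the sum of its edge weights. *)

From Stdlib Require Import Reals.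
From mathcomp Require Import all_boot.
Set Implicit Arguments. Unset Strict Implicit. Unset Printing Implicit Defensive.

Definition Rleb (x y : R) : bool := if Rle_dec x y then true else false.

Section Defs.
Variable V : finType.

Definition is_metric (delta : V -> V -> R) : Prop :=
  (forall u v, Rle 0 (delta u v)) /\
  (forall u v, delta u v = R0 <-> u = v) /\
  (forall u v, delta u v = delta v u) /\
  (forall u v w, Rle (delta u w) (Rplus (delta u v) (delta v w))).

Definition distinct_distances (delta : V -> V -> R) : Prop :=
  forall u v x y, u != v -> x != y -> delta u v = delta x y ->
    [set u; v] = [set x; y].

(* graphs on V are given by their edge sets: sets of 2-element vertex sets *)
Definition edge_rel (E : {set {set V}}) : rel V :=
  fun u v => (u != v) && ([set u; v] \in E).

(* weight of an edge set: sum of delta over its edges, each edge {u,v}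
   counted once via the ordered pair with enum_rank u < enum_rank v *)
Definition weight (delta : V -> V -> R) (E : {set {set V}}) : R :=
  foldr Rplus R0
    [seq delta p.1 p.2 | p <- enum [pred p : V * V |
        (enum_rank p.1 < enum_rank p.2)%N && ([set p.1; p.2] \in E)]].

Definition SDG (delta : V -> V -> R) (r : V -> R) : {set {set V}} :=
  [set e : {set V} | [exists u, exists v,
     [&& u != v, e == [set u; v], Rleb (delta u v) (r u) & Rleb (delta u v) (r v)]]].

Definition acyclic (F : {set {set V}}) : Prop :=
  forall c : seq V, (3 <= size c)%N -> ~ ucycle (edge_rel F) c.

Definition spanning_forest (F E : {set {set V}}) : Prop :=
  F \subset E /\ acyclic F /\
  (forall u v, connect (edge_rel F) u v = connect (edge_rel E) u v).

Definition min_spanning_forest (delta : V -> V -> R) (F E : {set {set V}}) : Prop :=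
  spanning_forest F E /\
  (forall F', spanning_forest F' E -> Rle (weight delta F) (weight delta F')).

Definition hamiltonian_path (s : seq V) : Prop := perm_eq s (enum V).

Definition path_weight (delta : V -> V -> R) (s : seq V) : R :=
  match s with
  | [::] => R0
  | x :: t => foldr Rplus R0 (pairmap delta x t)
  end.

Definition min_hamiltonian_path (delta : V -> V -> R) (s : seq V) : Prop :=
  hamiltonian_path s /\
  (forall s', hamiltonian_path s' -> Rle (path_weight delta s) (path_weight delta s')).

End Defs.

From HB Require Import structures.
From Stdlib Require Import Reals Lra.
From mathcomp Require Import all_boot.
Set Implicit Arguments. Unset Strict Implicit. Unset Printing Implicit Defensive.

(* Let S be a nonempty set of edges of the minimum spanning forest F, all of length at least
   t. Deleting S from F leaves #|S| + 1 endpoints of S in pairwise distinct components. Two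
   such endpoints x, y are at distance at least t: both have range at least t, so if
   delta x y < t then {x, y} is an edge of the disk graph, and exchanging it for an edge of S
   separating x from y in F would make F lighter. Hence the Hamiltonian path H, shortcut to
   these points, has w(H) >= #|S| t. Taking for S the k longest edges of F bounds the k-th
   longest edge by w(H) / k, so w(F) is at most w(H) times the harmonic number of #|F|,
   which is at most ln n / ln (5/4) since #|F| < n. *)

Lemma RplusA : associative Rplus.
Proof. by move=> *; rewrite Rplus_assoc. Qed.

HB.instance Definition _ := Monoid.isComLaw.Build R R0 Rplus RplusA Rplus_comm Rplus_0_l.

Lemma set2_inj (T : finType) (a b x y : T) : a != b -> [set x; y] = [set a; b] ->
  (x = a /\ y = b) \/ (x = b /\ y = a).
Proof.
move=> ab E.
have: [&& a \in [set x; y], b \in [set x; y], x \in [set a; b] & y \in [set a; b]].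
  by rewrite E -{3 4}E !inE !eqxx !orbT.
rewrite !inE => /and4P[/orP[]/eqP ? /orP[]/eqP ? _ _]; subst; rewrite ?eqxx in ab => //; tauto.
Qed.

Lemma connect_ind_path (T : finType) (e : rel T) (P : T -> Prop) x y :
  (forall u v, e u v -> P u -> P v) -> connect e x y -> P x -> P y.
Proof.
move=> he /connectP[s + ->]; elim: s x => //= z s IH x /andP[exz ps] Px.
exact: IH ps (he _ _ exz Px).
Qed.

Lemma exists_minimizer (T : finType) (f : T -> R) (A : {set T}) : A != set0 ->
  exists2 x, x \in A & forall y, y \in A -> Rle (f x) (f y).
Proof.
move: {2}#|A| (erefl #|A|) => n.
elim: n A => [|n IH] A cardA A0; first by rewrite (cards0_eq cardA) eqxx in A0.
have [a aA] := set0Pn _ A0.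
have cardAa : #|A :\ a| = n by move: cardA; rewrite (cardsD1 a) aA => -[].
case: (eqVneq (A :\ a) set0) => [Aa0|Aa0].
  exists a => // y yA; suff -> : y = a by apply: Rle_refl.
  by apply/eqP; move/setP/(_ y): Aa0; rewrite !inE yA andbT => /negbFE.
have [x /setD1P[_ xA] min_x] := IH _ cardAa Aa0.
have min_xa y : y \in A -> y != a -> Rle (f x) (f y) by move=> yA ya; apply: min_x; rewrite !inE ya.
case: (Rle_dec (f a) (f x)) => [ax|/Rnot_le_lt xa].
  exists a => // y yA; case: (eqVneq y a) => [->|ya]; first exact: Rle_refl.
  exact: Rle_trans ax (min_xa y yA ya).
exists x => // y yA; case: (eqVneq y a) => [->|ya]; first exact: Rlt_le.
exact: min_xa.
Qed.

Lemma RlebP x y : reflect (Rle x y) (Rleb x y).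
Proof. by rewrite /Rleb; case: Rle_dec => h; constructor. Qed.

Section Logarithm.
Local Open Scope R_scope.

Lemma ln_le_sub1 x : 0 < x -> ln x <= x - 1.
Proof. by move=> x0; have := exp_ineq1_le (ln x); rewrite exp_ln //; lra. Qed.

Lemma inv_succ_le_ln_succ_sub a : 0 < a -> / (a + 1) <= ln (a + 1) - ln a.
Proof.
move=> a0.
have frac0 : 0 < a / (a + 1) by apply: Rdiv_lt_0_compat; lra.
have inv0 : 0 < / (a + 1) by apply: Rinv_0_lt_compat; lra.
have := ln_le_sub1 frac0; rewrite /Rdiv ln_mult // ln_Rinv; last lra.
have -> : a * / (a + 1) - 1 = - / (a + 1) by field; lra.
lra.
Qed.

Lemma ln_le_ln x y : 0 < x -> x <= y -> ln x <= ln y.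
Proof.
move=> x0 /Rle_lt_or_eq_dec[xy|->]; last exact: Rle_refl.
exact: Rlt_le _ _ (ln_increasing _ _ x0 xy).
Qed.

Lemma ln_5_4_gt0 : 0 < ln (5 / 4).
Proof. by rewrite -ln_1; apply: ln_increasing; lra. Qed.

Lemma ln_5_4_le : ln (5 / 4) <= 1 / 4.
Proof. by have := ln_le_sub1 (_ : 0 < 5 / 4); lra. Qed.

(* [1 / a <= 2 (ln (a + 1) - ln a)] and [1 / c >= 4]: the base 5/4 is far from tight. *)
Lemma log_harmonic_step a c l L : 1 <= a -> 0 < c <= 1 / 4 -> 0 <= L -> l * a <= L ->
  l <= L * (ln (a + 1) - ln a) / c.
Proof.
move=> a1 [c0 c4] L0 la.
have d_ge := inv_succ_le_ln_succ_sub (_ : 0 < a).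
set d := ln (a + 1) - ln a in d_ge *.
have inv0 : 0 < / (a + 1) by apply: Rinv_0_lt_compat; lra.
have d1 : 1 <= d * (a + 1).
  apply: (Rle_trans _ (/ (a + 1) * (a + 1))); first by rewrite Rinv_l; lra.
  by apply: Rmult_le_compat_r; lra.
have d0 : 0 <= d by lra.
have ad : c <= a * d by nra.
apply: (Rmult_le_reg_r c) => //; rewrite /Rdiv Rmult_assoc Rinv_l; last lra.
rewrite Rmult_1_r.
case: (Rle_dec 0 l) => [l0|/Rnot_le_lt l0]; last by nra.
apply: (Rle_trans _ (l * (a * d))); first by apply: Rmult_le_compat_l.
rewrite -Rmult_assoc; exact: Rmult_le_compat_r.
Qed.

End Logarithm.

Section Weight.
Variables (V : finType) (delta : V -> V -> R).
Implicit Type E : {set {set V}}.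

Definition oriented_edge E (p : V * V) :=
  (enum_rank p.1 < enum_rank p.2)%N && ([set p.1; p.2] \in E).

Lemma weightE E : weight delta E = \big[Rplus/R0]_(p | oriented_edge E p) delta p.1 p.2.
Proof. by rewrite /weight foldrE big_map big_enum. Qed.

Lemma weight0 : weight delta set0 = R0.
Proof. by rewrite weightE big_pred0 // => p; rewrite /oriented_edge inE andbF. Qed.

Hypothesis delta_sym : forall u v, delta u v = delta v u.

Lemma weightD1 E a b : a != b -> [set a; b] \in E ->
  weight delta E = Rplus (delta a b) (weight delta (E :\ [set a; b])).
Proof.
wlog lt_ab : a b / (enum_rank a < enum_rank b)%N => [hwlog ab abE|ab abE].
  case: (ltngtP (enum_rank a) (enum_rank b)) => [lt|gt|/val_inj/enum_rank_inj eq_ab].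
  - exact: hwlog.
  - by rewrite delta_sym setUC; apply: hwlog; rewrite // 1?eq_sym // setUC.
  - by rewrite eq_ab eqxx in ab.
have ab_edge : oriented_edge E (a, b) by apply/andP.
rewrite !weightE (bigD1 (a, b)) //=; congr Rplus.
apply: eq_bigl => -[x y]; rewrite /oriented_edge /= !inE.
case: (boolP ([set x; y] == [set a; b])) => [/eqP/(set2_inj ab)|] /=; last first.
  by move=> ne; apply: andb_idr => _; apply: contraNneq ne => -[-> ->].
by rewrite andbF => -[] [-> ->]; rewrite ?eqxx ?andbF // ltnNge ltnW.
Qed.

Lemma weight1 a b : a != b -> weight delta [set [set a; b]] = delta a b.
Proof.
move=> ab; rewrite (weightD1 ab (set11 _)) setDv weight0; lra.
Qed.

End Weight.

Section Graph.
Variable V : finType.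
Implicit Types E F G S : {set {set V}}.

Definition pair_edges E := forall e, e \in E -> exists a b, a != b /\ e = [set a; b].

Definition separated (c : rel V) (P : {set V}) :=
  forall x y, x \in P -> y \in P -> x != y -> ~~ c x y.

Lemma edge_rel_sym E : symmetric (edge_rel E).
Proof. by move=> u v; rewrite /edge_rel eq_sym setUC. Qed.

Lemma connect_edge_rel_sym E : connect_sym (edge_rel E).
Proof. exact: sym_connect_sym (@edge_rel_sym E). Qed.

Lemma edge_rel_subset E1 E2 : E1 \subset E2 -> subrel (edge_rel E1) (edge_rel E2).
Proof. by move=> sub u v /andP[uv uvE]; rewrite /edge_rel uv (subsetP sub). Qed.

Lemma connect_subset E1 E2 u v : E1 \subset E2 ->
  connect (edge_rel E1) u v -> connect (edge_rel E2) u v.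
Proof. by move=> sub; apply: connect_sub => x y /(edge_rel_subset sub)/connect1. Qed.

Lemma acyclic_subset E1 E2 : E1 \subset E2 -> acyclic E2 -> acyclic E1.
Proof.
move=> sub ac c sz /andP[cy un]; apply: (ac c sz); apply/andP; split => //.
exact: (sub_cycle (edge_rel_subset sub) cy).
Qed.

Lemma edge_rel_setU1 G p q u v : edge_rel (G :|: [set [set p; q]]) u v ->
  edge_rel G u v \/ [set u; v] = [set p; q].
Proof. by case/andP=> uv; rewrite !inE => /orP[uvG|/eqP]; [left; apply/andP|right]. Qed.

Lemma acyclic_setD1_disconnected F a b : acyclic F -> a != b -> [set a; b] \in F ->
  ~~ connect (edge_rel (F :\ [set a; b])) a b.
Proof.
move=> acF ab abF; apply/negP => /connectP[s pth].
case/shortenP: pth => p pth up _ lst.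
apply: (acF (a :: p)); last first.
  apply/andP; split => //=; rewrite rcons_path (sub_path (edge_rel_subset (subD1set _ _)) pth).
  by rewrite -lst /edge_rel eq_sym ab setUC.
case: p pth up lst => [|y [|z p]] //=; first by move=> _ _ ba; rewrite ba eqxx in ab.
by move=> /andP[/andP[_]] + _ _ yb; rewrite yb !inE eqxx.
Qed.

Lemma connect_setD1_cases G a b u w : a != b -> connect (edge_rel G) u w ->
  let c := connect (edge_rel (G :\ [set a; b])) in
  c u w \/ (c u a /\ c b w) \/ (c u b /\ c a w).
Proof.
move=> ab cuw c.
apply: (connect_ind_path (P := fun x => c u x \/ (c u a /\ c b x) \/ (c u b /\ c a x))) cuw _;
  last by left; apply: connect0.
have c_sym := connect_edge_rel_sym (G :\ [set a; b]).
have c_trans x y z : c x y -> c y z -> c x z by apply: connect_trans.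
move=> x y /andP[xy xyG].
case: (eqVneq [set x; y] [set a; b]) => [/(set2_inj ab) xy_ab|ne].
  have c0 z : c z z by apply: connect0.
  case: xy_ab => -[-> ->] [h|[[h1 h2]|[h1 h2]]];
  first [by left | by right; left | by right; right
        | by left; apply: c_trans h1 _; rewrite c_sym].
have cxy : c x y by apply: connect1; rewrite /edge_rel xy !inE ne.
case=> [h|[[h1 h2]|[h1 h2]]].
- by left; apply: c_trans h cxy.
- by right; left; split => //; apply: c_trans h2 cxy.
- by right; right; split => //; apply: c_trans h2 cxy.
Qed.

Lemma acyclic_setU1 G p q : acyclic G -> ~~ connect (edge_rel G) p q ->
  acyclic (G :|: [set [set p; q]]).
Proof.
move=> acG npq c sz /andP[cy uc].
set G' := G :|: _ in cy.
have pq : p != q by apply: contraNneq npq => ->; apply: connect0.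
have in_G : {in predC1 p &, subrel (edge_rel G') (edge_rel G)}.
  move=> u v up vp /edge_rel_setU1[//|/(set2_inj pq)[][? ?]];
  by subst; rewrite !inE eqxx in up vp.
have avoid_p s : p \notin s -> all (predC1 p) s.
  by move=> pn; apply/allP => z zs; rewrite !inE; apply: contraNneq pn => <-.
case: (boolP (p \in c)) => [/rot_to[i s rc]|pc]; last first.
  by apply: (acG c sz); apply/andP; split => //; apply: (sub_in_cycle in_G) cy; apply: avoid_p.
have: [/\ cycle (edge_rel G') (p :: s), uniq (p :: s) & (3 <= size (p :: s))%N].
  by rewrite -rc rot_cycle rot_uniq size_rot.
case: s {rc} => [|y s] [cy' uc' sz'] //.
move: cy'; rewrite [cycle _ _]/= rcons_path => /and3P[epy pth ezp].
case/andP: (uc'); rewrite in_cons => /norP[py ps] /andP[ys _].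
have p_ys : p \notin y :: s by rewrite in_cons negb_or py.
have pth_G : path (edge_rel G) y s := sub_in_path in_G (avoid_p _ p_ys) pth.
have z_y : last y s != y.
  case: s ys sz' {uc' pth pth_G ezp ps p_ys epy} => // z s ys _.
  by apply: contraNneq ys => <-; exact: (mem_last z s).
have [e_zp|z_q] : edge_rel G (last y s) p \/ last y s = q.
  case/edge_rel_setU1: ezp => [|/(set2_inj pq)[[_ p_q]|[z_q _]]];
    [by left | by rewrite p_q eqxx in pq | by right].
- have [e_py|y_q] : edge_rel G p y \/ y = q.
    case/edge_rel_setU1: epy => [|/(set2_inj pq)[[_ y_q]|[p_q _]]];
      [by left | by right | by rewrite p_q eqxx in pq].
  + by apply: (acG _ sz'); rewrite /ucycle uc' andbT [cycle _ _]/= rcons_path e_py pth_G.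
  + move/negP: npq; apply; rewrite connect_edge_rel_sym -y_q.
    exact: connect_trans (path_connect pth_G (mem_last _ _)) (connect1 e_zp).
- have e_py : edge_rel G p y.
    case/edge_rel_setU1: epy => [//|/(set2_inj pq)[[_ y_q]|[p_q _]]].
      by rewrite z_q y_q eqxx in z_y.
    by rewrite p_q eqxx in pq.
  move/negP: npq; apply; rewrite -z_q.
  apply: (path_connect (p := y :: s)); first by rewrite /= e_py.
  by rewrite in_cons mem_last orbT.
Qed.

Lemma disconnecting_set_cut_edge F S u w : acyclic F -> pair_edges F -> S \subset F ->
  connect (edge_rel F) u w -> ~~ connect (edge_rel (F :\: S)) u w ->
  exists2 e, e \in S & ~~ connect (edge_rel (F :\ e)) u w.
Proof.
move=> acF F2; move: {2}#|S| (erefl #|S|) => n.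
elim: n S => [|n IH] S cardS sSF cuw ncuw.
  by move: ncuw; rewrite (cards0_eq cardS) setD0 cuw.
have [e eS] : exists e, e \in S.
  by apply/set0Pn/eqP => S0; rewrite S0 cards0 in cardS.
have sSeF : S :\ e \subset F := subset_trans (subD1set S e) sSF.
case: (boolP (connect (edge_rel (F :\: (S :\ e))) u w)) => [cuw'|ncuw']; last first.
  have [|e' /setD1P[_ e'S] ne'] := IH _ _ sSeF cuw ncuw'; last by exists e'.
  by move: cardS; rewrite (cardsD1 e) eS => -[].
exists e => //; apply/negP => cuw_e.
have [a [b [ab e_ab]]] := F2 e (subsetP sSF e eS); subst e.
have FS_e : F :\: (S :\ [set a; b]) :\ [set a; b] = F :\: S.
  by apply/setP => x; rewrite !inE; case: eqVneq => // ->; rewrite eS.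
have FS_sub : F :\: S \subset F :\ [set a; b].
  by apply/subsetP => x; rewrite !inE => /andP[xS ->]; rewrite andbT; apply: contraNneq xS => ->.
have c_sym := connect_edge_rel_sym (F :\ [set a; b]).
have cab : connect (edge_rel (F :\ [set a; b])) a b.
  case: (connect_setD1_cases ab cuw'); rewrite FS_e.
    by move=> cuw_S; rewrite cuw_S in ncuw.
  case=> -[/(connect_subset FS_sub) c1 /(connect_subset FS_sub) c2].
    by rewrite c_sym in c1; rewrite c_sym in c2; apply: connect_trans c1 (connect_trans cuw_e c2).
  by rewrite c_sym in cuw_e; apply: connect_trans c2 (connect_trans cuw_e c1).
by move: (acyclic_setD1_disconnected acF ab (subsetP sSF _ eS)); rewrite cab.
Qed.

Lemma separated_setU1 (c c' : rel V) P x : symmetric c -> subrel c c' ->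
  separated c' P -> (forall p, p \in P -> ~~ c x p) -> separated c (x |: P).
Proof.
move=> c_sym cc' sepP x_far y z; rewrite !inE => /orP[/eqP->|yP] /orP[/eqP->|zP] yz.
- by rewrite eqxx in yz.
- exact: x_far.
- by rewrite c_sym; apply: x_far.
- by apply: contra (sepP y z yP zP yz); apply: cc'.
Qed.

Lemma separated_endpoints F S : acyclic F -> pair_edges F -> S \subset F -> S != set0 ->
  exists P : {set V}, [/\ #|P| = #|S|.+1, P \subset cover S &
    separated (connect (edge_rel (F :\: S))) P].
Proof.
move=> acF F2; move: {2}#|S| (erefl #|S|) => n.
elim: n S => [|n IH] S cardS sSF S0; first by rewrite (cards0_eq cardS) eqxx in S0.
have [e eS] := set0Pn _ S0.
have [a [b [ab e_ab]]] := F2 e (subsetP sSF e eS); subst e.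
set c := connect (edge_rel (F :\: S)).
have c_sym : symmetric c := connect_edge_rel_sym _.
have FS_sub : F :\: S \subset F :\ [set a; b].
  by apply/subsetP => x; rewrite !inE => /andP[xS ->]; rewrite andbT; apply: contraNneq xS => ->.
have ncab : ~~ c a b.
  apply: contra (acyclic_setD1_disconnected acF ab (subsetP sSF _ eS)).
  exact: connect_subset FS_sub.
have ab_cover : [set a; b] \subset cover S.
  by apply/subsetP => x xab; apply/bigcupP; exists [set a; b].
have cardSe : #|S :\ [set a; b]| = n by move: cardS; rewrite (cardsD1 [set a; b]) eS => -[].
case: (eqVneq (S :\ [set a; b]) set0) => [Se0|Se0].
  exists [set a; b]; split => //; first by rewrite cards2 ab cardS -cardSe Se0 cards0.
  move=> x y; rewrite !inE => /orP[]/eqP-> /orP[]/eqP->; rewrite ?eqxx // => _.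
  by rewrite c_sym.
have sSeF : S :\ [set a; b] \subset F := subset_trans (subD1set S _) sSF.
have [P [cardP P_cover sepP]] := IH _ cardSe sSeF Se0.
set c' := connect (edge_rel (F :\: (S :\ [set a; b]))).
have FS_sub' : F :\: S \subset F :\: (S :\ [set a; b]) by apply: setDS; apply: subD1set.
have cc' : subrel c c' by move=> x y; apply: connect_subset FS_sub'.
have [x [x_ab x_far]] : exists x, x \in [set a; b] /\ forall p, p \in P -> ~~ c x p.
  case: (boolP [exists p in P, c a p]) => [/exists_inP[p pP cap]|/exists_inPn a_far];
    last by exists a; rewrite !inE eqxx.
  exists b; split; first by rewrite !inE eqxx orbT.
  move=> q qP; apply/negP => cbq.
  have cpa : c p a by rewrite c_sym.
  have e'ab : edge_rel (F :\: (S :\ [set a; b])) a b.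
    by rewrite /edge_rel ab !inE eqxx (subsetP sSF _ eS).
  have c'pq : c' p q := connect_trans (cc' _ _ cpa) (connect_trans (connect1 e'ab) (cc' _ _ cbq)).
  case: (eqVneq p q) => [pq|pq]; last exact: (negP (sepP p q pP qP pq) c'pq).
  by subst q; rewrite c_sym in cbq; exact: (negP ncab (connect_trans cap cbq)).
have x_notin : x \notin P by apply/negP => /x_far /negP; apply; apply: connect0.
exists (x |: P); split.
- by rewrite cardsU1 x_notin cardP cardSe cardS.
- rewrite subUset sub1set (subsetP ab_cover) //; apply: subset_trans P_cover _.
  by apply/subsetP => y /bigcupP[e /setD1P[_ eS'] ye]; apply/bigcupP; exists e.
- exact: separated_setU1 c_sym cc' sepP x_far.
Qed.

Lemma forest_card_lt F : acyclic F -> pair_edges F -> F != set0 -> (#|F| < #|V|)%N.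
Proof.
move=> acF F2 F0; have [P [cardP _ _]] := separated_endpoints acF F2 (subxx F) F0.
by rewrite -cardP max_card.
Qed.

End Graph.

Section PathWeight.
Local Open Scope R_scope.
Variables (V : finType) (delta : V -> V -> R).
Hypothesis delta_ge0 : forall u v, 0 <= delta u v.
Hypothesis delta_triangle : forall u v w, delta u w <= delta u v + delta v w.

Definition walk_weight x s := foldr Rplus R0 (pairmap delta x s).

Lemma walk_weight_cons x y s : walk_weight x (y :: s) = delta x y + walk_weight y s.
Proof. by []. Qed.

Lemma walk_weight_ge0 x s : 0 <= walk_weight x s.
Proof.
elim: s x => [|y s IH] x; first by apply: Rle_refl.
by rewrite walk_weight_cons; have := delta_ge0 x y; have := IH y; lra.
Qed.

Lemma walk_weight_shortcut x y s : walk_weight x s <= delta x y + walk_weight y s.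
Proof.
case: s => [|z s]; first by rewrite /walk_weight /=; have := delta_ge0 x y; lra.
by rewrite !walk_weight_cons; have := delta_triangle x y z; lra.
Qed.

Lemma walk_weight_filter (P : pred V) x s : walk_weight x (filter P s) <= walk_weight x s.
Proof.
elim: s x => [|y s IH] x /=; first by apply: Rle_refl.
rewrite walk_weight_cons; case: (P y); rewrite ?walk_weight_cons.
  by have := IH y; lra.
by have := IH x; have := walk_weight_shortcut x y s; lra.
Qed.

Lemma path_weight_le_walk x s : path_weight delta s <= walk_weight x s.
Proof.
case: s => [|y s]; first by apply: walk_weight_ge0.
change (walk_weight y s <= walk_weight x (y :: s)).
by rewrite walk_weight_cons; have := delta_ge0 x y; lra.
Qed.

Lemma path_weight_filter (P : pred V) s :
  path_weight delta (filter P s) <= path_weight delta s.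
Proof.
elim: s => [|x s IH] /=; first by apply: Rle_refl.
case: (P x) => /=; first exact: (walk_weight_filter P x s).
exact: Rle_trans IH (path_weight_le_walk x s).
Qed.

Lemma walk_weight_ge_separated t x s : uniq (x :: s) ->
  (forall u v, u \in x :: s -> v \in x :: s -> u != v -> t <= delta u v) ->
  INR (size s) * t <= walk_weight x s.
Proof.
elim: s x => [|y s IH] x; first by move=> _ _; rewrite /= Rmult_0_l; apply: Rle_refl.
move=> /andP[x_ys uys] far; rewrite walk_weight_cons [size _]/= S_INR.
have sub z : z \in y :: s -> z \in [:: x, y & s] by rewrite [z \in x :: _]in_cons => ->; rewrite orbT.
have t_xy : t <= delta x y.
  by apply: far; [exact: mem_head | exact/sub/mem_head | apply: contraNneq x_ys => ->; exact: mem_head].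
rewrite Rmult_plus_distr_r Rmult_1_l [delta x y + _]Rplus_comm; apply: Rplus_le_compat t_xy.
exact: IH y uys (fun u v uy vy => far u v (sub u uy) (sub v vy)).
Qed.

Lemma path_weight_ge_separated (H : seq V) (P : {set V}) t : perm_eq H (enum V) ->
  (forall u v, u \in P -> v \in P -> u != v -> t <= delta u v) ->
  INR #|P|.-1 * t <= path_weight delta H.
Proof.
move=> pH far; apply: Rle_trans (path_weight_filter (mem P) H).
have uniqPH : uniq (filter (mem P) H) by rewrite filter_uniq // (perm_uniq pH) enum_uniq.
have <- : size (filter (mem P) H) = #|P|.
  by rewrite size_filter (permP pH) enumT cardE /enum_mem size_filter.
have inP u : u \in filter (mem P) H -> u \in P by rewrite mem_filter => /andP[].
case: (filter (mem P) H) uniqPH inP => [|x s] uniq_xs inP /=; first by rewrite Rmult_0_l; apply: Rle_refl.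
by apply: walk_weight_ge_separated => // u v /inP uP /inP vP; apply: far.
Qed.

Lemma path_weight_ge0 s : 0 <= path_weight delta s.
Proof. by case: s => [|x s]; [apply: Rle_refl | apply: walk_weight_ge0]. Qed.

End PathWeight.

Section DiskGraph.
Local Open Scope R_scope.
Variables (V : finType) (delta : V -> V -> R) (r : V -> R).
Hypothesis delta_sym : forall u v, delta u v = delta v u.

Lemma SDGP e : reflect
  (exists u v, [/\ u != v, e = [set u; v], delta u v <= r u & delta u v <= r v])
  (e \in SDG delta r).
Proof.
rewrite inE; apply: (iffP existsP) => [[u /existsP[v /and4P[uv /eqP-> /RlebP du /RlebP dv]]]|].
  by exists u, v.
case=> u [v [uv -> du dv]]; exists u; apply/existsP; exists v.
by rewrite uv eqxx /=; apply/andP; split; apply/RlebP.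
Qed.

Lemma SDG_pair_edges : pair_edges (SDG delta r).
Proof. by move=> e /SDGP[u [v [uv -> _ _]]]; exists u, v. Qed.

Lemma SDG_edge_le_range a b x : a != b -> [set a; b] \in SDG delta r ->
  x \in [set a; b] -> delta a b <= r x.
Proof.
move=> ab /SDGP[u [v [uv /esym/(set2_inj ab)[][-> ->] du dv]]];
by rewrite !inE => /orP[]/eqP->; rewrite // delta_sym.
Qed.

End DiskGraph.

Section MinSpanningForest.
Local Open Scope R_scope.
Variables (V : finType) (delta : V -> V -> R) (r : V -> R) (F : {set {set V}}).
Hypothesis delta_sym : forall u v, delta u v = delta v u.
Hypothesis msf : min_spanning_forest delta F (SDG delta r).
Implicit Type S : {set {set V}}.

Lemma msf_pair_edges : pair_edges F.
Proof.
case: msf => -[sFS _] _ e eF.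
exact: SDG_pair_edges (subsetP sFS e eF).
Qed.

Lemma msf_cut_exchange a b p q : a != b -> [set a; b] \in F -> p != q ->
  [set p; q] \in SDG delta r -> ~~ connect (edge_rel (F :\ [set a; b])) p q ->
  delta a b <= delta p q.
Proof.
move=> ab abF pq pqS ncpq.
case: msf => -[sFS [acF spanF]] minF.
case: (Rle_dec (delta a b) (delta p q)) => // /Rnot_le_lt lt_pq.
set e := [set a; b] in ncpq.
set F' := (F :\ e) :|: [set [set p; q]].
have cpq : connect (edge_rel F) p q by rewrite spanF; apply: connect1; apply/andP.
have pq_notin : [set p; q] \notin F.
  apply/negP => pqF; case: (eqVneq [set p; q] e) => [/(set2_inj ab)[][? ?]|ne];
    [by subst; lra | by subst; rewrite delta_sym in lt_pq; lra |].
  by move: ncpq; rewrite (connect1 (_ : edge_rel (F :\ e) p q)) // /edge_rel pq !inE ne.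
have sF'S : F' \subset SDG delta r.
  by rewrite subUset sub1set pqS andbT; apply: subset_trans sFS; apply: subD1set.
have sFe : F :\ e \subset F' := subsetUl _ _.
have cab : connect (edge_rel F') a b.
  have c_sym := connect_edge_rel_sym F'.
  have e'pq : connect (edge_rel F') p q by apply: connect1; rewrite /edge_rel pq !inE eqxx orbT.
  case: (connect_setD1_cases ab cpq) => [|[[c1 c2]|[c1 c2]]]; first by rewrite (negbTE ncpq).
  - move: c1 c2 => /(connect_subset sFe) c1 /(connect_subset sFe) c2.
    by rewrite c_sym in c1; rewrite c_sym in c2; apply: connect_trans c1 (connect_trans e'pq c2).
  - move: c1 c2 => /(connect_subset sFe) c1 /(connect_subset sFe) c2.
    by rewrite c_sym in e'pq; apply: connect_trans c2 (connect_trans e'pq c1).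
have spanF' : spanning_forest F' (SDG delta r).
  split=> //; split.
    by apply: acyclic_setU1 ncpq; apply: acyclic_subset acF; apply: subD1set.
  move=> u v; apply/idP/idP; first exact: connect_subset.
  rewrite -spanF; apply: connect_sub => x y /andP[xy xyF].
  case: (eqVneq [set x; y] e) => [/(set2_inj ab)[][-> ->]|ne]; first exact: cab.
    by rewrite connect_edge_rel_sym.
  by apply: connect1; rewrite /edge_rel xy !inE ne xyF.
have := minF F' spanF'.
rewrite (weightD1 delta_sym ab abF) (weightD1 delta_sym pq (_ : [set p; q] \in F')); last first.
  by rewrite !inE eqxx orbT.
have -> : F' :\ [set p; q] = F :\ e.
  apply/setP => x; rewrite !inE; case: (eqVneq x [set p; q]) => [->|] /=.
    by rewrite (negbTE pq_notin) andbF.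
  by rewrite orbF.
rewrite -/e; lra.
Qed.

Lemma msf_cover_range S t x : S \subset F ->
  (forall e, e \in S -> t <= weight delta [set e]) -> x \in cover S -> t <= r x.
Proof.
move=> sSF long /bigcupP[e eS xe].
have eSDG : e \in SDG delta r by case: msf => -[sFS _] _; apply: (subsetP sFS); apply: (subsetP sSF).
have [a [b [ab e_ab]]] := msf_pair_edges (subsetP sSF e eS); subst e.
have := long _ eS; rewrite weight1 // => t_ab.
exact: Rle_trans t_ab (SDG_edge_le_range delta_sym ab eSDG xe).
Qed.

Lemma msf_separated_far S t x y : S \subset F ->
  (forall e, e \in S -> t <= weight delta [set e]) ->
  x \in cover S -> y \in cover S -> x != y ->
  ~~ connect (edge_rel (F :\: S)) x y -> t <= delta x y.
Proof.
move=> sSF long xS yS xy ncxy.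
case: (Rle_dec t (delta x y)) => // /Rnot_le_lt lt_xy.
have [[sFS [acF spanF]] _] := msf.
have xySDG : [set x; y] \in SDG delta r.
  apply/SDGP; exists x, y; split=> //; apply: Rlt_le; apply: Rlt_le_trans lt_xy _.
    exact: msf_cover_range xS.
  exact: msf_cover_range yS.
have cxy : connect (edge_rel F) x y by rewrite spanF; apply: connect1; apply/andP.
have [e eS nce] := disconnecting_set_cut_edge acF msf_pair_edges sSF cxy ncxy.
have [a [b [ab e_ab]]] := msf_pair_edges (subsetP sSF e eS); subst e.
have := long _ eS; rewrite weight1 // => t_ab.
have := msf_cut_exchange ab (subsetP sSF _ eS) xy xySDG nce; lra.
Qed.

Hypothesis delta_ge0 : forall u v, 0 <= delta u v.
Hypothesis delta_triangle : forall u v w, delta u w <= delta u v + delta v w.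

Lemma msf_card_mul_le_path_weight S t H : perm_eq H (enum V) -> S \subset F -> S != set0 ->
  (forall e, e \in S -> t <= weight delta [set e]) ->
  INR #|S| * t <= path_weight delta H.
Proof.
move=> pH sSF S0 long; have [[_ [acF _]] _] := msf.
have [P [cardP sPS sepP]] := separated_endpoints acF msf_pair_edges sSF S0.
have := path_weight_ge_separated delta_ge0 delta_triangle (P := P) (t := t) pH.
rewrite cardP; apply.
move=> u v uP vP uv.
exact: msf_separated_far sSF long (subsetP sPS _ uP) (subsetP sPS _ vP) uv (sepP u v uP vP uv).
Qed.

End MinSpanningForest.

Section WeightBound.
Local Open Scope R_scope.
Variables (V : finType) (delta : V -> V -> R) (r : V -> R) (F : {set {set V}}) (H : seq V).
Hypothesis delta_ge0 : forall u v, 0 <= delta u v.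
Hypothesis delta_sym : forall u v, delta u v = delta v u.
Hypothesis delta_triangle : forall u v w, delta u w <= delta u v + delta v w.
Hypothesis msf : min_spanning_forest delta F (SDG delta r).
Hypothesis H_perm : perm_eq H (enum V).

Lemma msf_subset_weight_le_log (E : {set {set V}}) : E \subset F ->
  weight delta E <= path_weight delta H * ln (INR #|E|.+1) / ln (5 / 4).
Proof.
have c0 := ln_5_4_gt0; have c4 := ln_5_4_le; have L0 := path_weight_ge0 delta_ge0 H.
set L := path_weight delta H; set c := ln (5 / 4) in c0 c4 *.
move: {2}#|E| (erefl #|E|) => m.
elim: m E => [|m IH] E cardE sEF.
  by rewrite (cards0_eq cardE) weight0 cards0 /= ln_1 Rmult_0_r /Rdiv Rmult_0_l; apply: Rle_refl.
have E0 : E != set0 by apply/eqP => E0; rewrite E0 cards0 in cardE.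
have [e eE e_min] := exists_minimizer (fun e => weight delta [set e]) E0.
have [a [b [ab e_ab]]] := msf_pair_edges msf (subsetP sEF e eE); subst e.
have := msf_card_mul_le_path_weight delta_sym msf delta_ge0 delta_triangle H_perm sEF E0 e_min.
rewrite weight1 // cardE Rmult_comm => long.
have cardEab : #|E :\ [set a; b]| = m by move: cardE; rewrite (cardsD1 [set a; b]) eE => -[].
have := IH _ cardEab (subset_trans (subD1set _ _) sEF); rewrite cardEab.
have m1 : 1 <= INR m.+1 by rewrite S_INR; have := pos_INR m; lra.
have := log_harmonic_step m1 (conj c0 c4) L0 long; rewrite -/L.
rewrite (weightD1 delta_sym ab eE) (S_INR m.+1).
have -> : L * ln (INR m.+1 + 1) / c =
    L * ln (INR m.+1) / c + L * (ln (INR m.+1 + 1) - ln (INR m.+1)) / c.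
  by field; lra.
lra.
Qed.

End WeightBound.

Theorem lemma2 (V : finType) (delta : V -> V -> R) (r : V -> R)
  (F : {set {set V}}) (H : seq V) :
  is_metric delta ->
  distinct_distances delta ->
  (forall v, Rlt R0 (r v)) ->
  min_spanning_forest delta F (SDG delta r) ->
  min_hamiltonian_path delta H ->
  Rle (weight delta F)
      (Rmult (Rdiv (ln (INR #|V|)) (ln (Rdiv (IZR 5) (IZR 4)))) (path_weight delta H)).
Proof.
move=> [delta_ge0 [_ [delta_sym delta_triangle]]] _ _ msf [H_perm _].
have := msf_subset_weight_le_log delta_ge0 delta_sym delta_triangle msf H_perm (subxx F).
have L0 := path_weight_ge0 delta_ge0 H; have c0 := ln_5_4_gt0.
case: (posnP #|V|) => [V0|V_gt0].
  have -> : H = [::] by apply: size0nil; rewrite (perm_size H_perm) -cardT V0.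
  by rewrite /= Rmult_0_r Rmult_0_l /Rdiv Rmult_0_l.
have F_lt : (#|F| < #|V|)%N.
  have [[_ [acF _]] _] := msf.
  case: (eqVneq F set0) => [->|F0]; first by rewrite cards0.
  exact: forest_card_lt acF (msf_pair_edges msf) F0.
have ln_le : Rle (ln (INR #|F|.+1)) (ln (INR #|V|)).
  by apply: ln_le_ln; [apply: lt_0_INR; apply/ltP | apply: le_INR; apply/leP].
have ic0 : Rle 0 (Rmult (path_weight delta H) (/ ln (5 / 4))).
  by apply: Rmult_le_pos => //; apply: Rlt_le; apply: Rinv_0_lt_compat.
rewrite /Rdiv; nra.
Qed.
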